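(* Fix an sBS $k$, a time slot $t$, and $\epsilon>0$. Let $\hat{\mathbf P}_k^{(t)}$ be an estimate of $\mathbf P_k$ obtained either by the point estimator or by the Bayesian estimator, and let $(\mathbf u_t,\mathbf v_t)\in\arg\max_{(\mathbf u,\mathbf v)\in\mathcal C_{c,r}}\mathbf u^T\hat{\mathbf P}_k^{(t)}\mathbf v$. Let $\widehat{\Delta P}^{(t)}:=\mathbf P_k-\hat{\mathbf P}_k^{(t)}$ and let $\mathcal N_\epsilon$ be an $\epsilon$-cover of $\mathcal C_{c,r}$. Then $$\Pr\Big\{\sup_{(\mathbf u,\mathbf v)\in\mathcal C_{c,r}}\mathbf u^T\mathbf P_k\mathbf v-\mathbf u_t^T\mathbf P_k\mathbf v_t\ge\epsilon\Big\}\le|\mathcal N_\epsilon|\,\Pr\Big\{\|\widehat{\Delta P}^{(t)}\|_F\ge\frac{\epsilon}{4\kappa rc}\Big\}.$$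
   Context: Setting: a catalog of $F$ files $\{1,\dots,F\}$; time is slotted; in every slot each of $N$ users of a small base station (sBS) requests a file. For sBS $k$, the probability transition matrix (PTM) $\mathbf P_k\in[0,1]^{F\times F}$ has entries $(\mathbf P_k)_{ij}=p_{ij,k}$, the probability that a user at sBS $k$ requests file $i$ given that file $j$ is recommended; $\mathbf P_k$ does not change over time. For a cache size $c>0$ and a recommendation budget $r>0$, the strategy set is $\mathcal C_{c,r}=\{(\mathbf u,\mathbf v)\in[0,1]^F\times[0,1]^F:\mathbf u^T\mathbf 1\le c,\ \mathbf v^T\mathbf 1\le r\}$, where $u_i$ (resp. $v_j$) is the probability of caching file $i$ (resp. recommending file $j$); the average cache hit of $(\mathbf u,\mathbf v)$ at sBS $k$ is $\mathbf u^T\mathbf P_k\mathbf v$. $d_{ik}^{(s)}$ is the number of requests for file $i$ at sBS $k$ in slot $s$, and $v_{jk}^{s}\in\{0,1\}$ indicates whether file $j$ was recommended at sBS $k$ in slot $s$. Point estimator: $\hat p_{ij,k}^{(t)}=\frac{\sum_{s=0}^{t-1}d_{ik}^{(s)}v_{jk}^{s-1}}{N\sum_{s=0}^{t-1}v_{jk}^{s-1}}$. Bayesian estimator: for each $j$ independently, the column $(\hat p^{(t)}_{1j,k},\dots,\hat p^{(t)}_{Fj,k})$ is drawn from the Dirichlet distribution $\mathrm{Dir}(\alpha^{(t)}_{1jk},\dots,\alpha^{(t)}_{Fjk})$ with $\alpha^{(t)}_{ijk}=\sum_{q=1}^{t-1}d_{ik}^{(q)}v_{jk}^{q-1}$. An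 $\epsilon$-cover of $\mathcal C_{c,r}$ is a finite set $\mathcal N_\epsilon$ of pairs $(\mathbf x,\mathbf y)$ such that for every $(\mathbf u,\mathbf v)\in\mathcal C_{c,r}$ some $(\mathbf x,\mathbf y)\in\mathcal N_\epsilon$ satisfies $\|\mathbf u-\mathbf x\|_2\le\epsilon/8$ and $\|\mathbf v-\mathbf y\|_2\le\epsilon/8$; $|\mathcal N_\epsilon|$ is its cardinality. $\kappa>0$ is a fixed constant such that $|\mathbf x^T A\mathbf y|\le\kappa\|\mathbf x\|_1\|\mathbf y\|_1\|A\|_F$ for all vectors $\mathbf x,\mathbf y$ and matrices $A$. *)

From HB Require Import structures.
From mathcomp Require Import all_boot all_order all_algebra.
From mathcomp Require Import all_classical all_reals all_analysis.
Set Implicit Arguments. Unset Strict Implicit. Unset Printing Implicit Defensive.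
Import Order.TTheory GRing.Theory Num.Theory.
Local Open Scope ring_scope.

Definition bilin (R : realType) (F : nat) (x : 'cV[R]_F) (A : 'M[R]_F) (y : 'cV[R]_F) : R :=
  (x^T *m A *m y) 0 0.

Definition l1norm (R : realType) (F : nat) (x : 'cV[R]_F) : R := \sum_i `|x i 0|.
Definition l2norm (R : realType) (F : nat) (x : 'cV[R]_F) : R :=
  Num.sqrt (\sum_i x i 0 ^+ 2).
Definition frob (R : realType) (F : nat) (A : 'M[R]_F) : R :=
  Num.sqrt (\sum_i \sum_j A i j ^+ 2).

Definition inC (R : realType) (F : nat) (c r : R) (u v : 'cV[R]_F) : Prop :=
  (forall i, 0 <= u i 0 <= 1) /\ (forall j, 0 <= v j 0 <= 1) /\
  \sum_i u i 0 <= c /\ \sum_j v j 0 <= r.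

Definition supC (R : realType) (F : nat) (c r : R) (A : 'M[R]_F) : R :=
  sup [set z : R | exists u v, inC c r u v /\ z = bilin u A v].

Definition is_cover (R : realType) (F : nat) (c r eps : R)
    (N : seq ('cV[R]_F * 'cV[R]_F)) : Prop :=
  uniq N /\
  forall u v, inC c r u v ->
    exists2 xy, xy \in N & l2norm (u - xy.1) <= eps / 8 /\ l2norm (v - xy.2) <= eps / 8.

From HB Require Import structures.
From mathcomp Require Import all_boot all_order all_algebra.
From mathcomp Require Import all_classical all_reals all_analysis.
From mathcomp Require Import measurable_realfun ring lra.
Set Implicit Arguments. Unset Strict Implicit. Unset Printing Implicit Defensive.
Import Order.TTheory GRing.Theory Num.Theory.
Local Open Scope classical_set_scope.
Local Open Scope ring_scope.

(* For (u, v) in C_{c,r}, the bilinear-norm bound gives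
   |u^T (P - P^) v| <= kappa c r ||P - P^||_F.  Optimality of (u_t, v_t) for P^
   then bounds the optimality gap for P by twice that, so the event
   {gap >= eps} is contained in {||P - P^||_F >= eps / (2 kappa r c)}, hence in
   the right-hand event.  No union bound is needed: the cover only contributes
   the factor |N| >= 1, as it must cover (0, 0) in C_{c,r}. *)

Section BilinearForm.
Variables (R : realType) (F : nat).

Lemma bilinE (x : 'cV[R]_F) (A : 'M[R]_F) (y : 'cV[R]_F) :
  bilin x A y = \sum_j (\sum_i x i 0 * A i j) * y j 0.
Proof.
rewrite /bilin !mxE; apply: eq_bigr => j _; rewrite !mxE; congr (_ * _).
by apply: eq_bigr => i _; rewrite !mxE.
Qed.

Lemma bilinBm (x : 'cV[R]_F) (A B : 'M[R]_F) (y : 'cV[R]_F) :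
  bilin x (A - B) y = bilin x A y - bilin x B y.
Proof. by rewrite /bilin mulmxBr mulmxBl !mxE. Qed.

Lemma frob_ge0 (A : 'M[R]_F) : 0 <= frob A.
Proof. exact: sqrtr_ge0. Qed.

Lemma inC0 (c r : R) : 0 <= c -> 0 <= r -> inC c r (0 : 'cV[R]_F) 0.
Proof.
move=> c0 r0; split; first by move=> i; rewrite mxE lexx ler01.
split; first by move=> j; rewrite mxE lexx ler01.
by rewrite !big1 // => i _; rewrite mxE.
Qed.

Lemma inC_l1norm (c r : R) (u v : 'cV[R]_F) :
  inC c r u v -> l1norm u <= c /\ l1norm v <= r.
Proof.
have l1E (x : 'cV[R]_F) : (forall i, 0 <= x i 0 <= 1) -> l1norm x = \sum_i x i 0.
  by move=> hx; apply: eq_bigr => i _; rewrite ger0_norm //; case/andP: (hx i).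
by move=> [hu [hv [su sv]]]; rewrite !l1E.
Qed.

End BilinearForm.

Section OptimalityGap.
Variables (R : realType) (F : nat) (c r kappa : R).
Hypotheses (c_gt0 : 0 < c) (r_gt0 : 0 < r) (kappa_gt0 : 0 < kappa).
Hypothesis bilin_le : forall (x y : 'cV[R]_F) (A : 'M[R]_F),
  `|bilin x A y| <= kappa * l1norm x * l1norm y * frob A.

Lemma bilin_inC_le (A : 'M[R]_F) (u v : 'cV[R]_F) :
  inC c r u v -> `|bilin u A v| <= kappa * c * r * frob A.
Proof.
move=> /inC_l1norm [lu lv]; apply: le_trans (bilin_le _ _ _) _.
apply: ler_wpM2r; first exact: frob_ge0.
rewrite -!mulrA; apply: ler_wpM2l; first exact: ltW.
apply: ler_pM => //; apply: sumr_ge0 => i _; exact: normr_ge0.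
Qed.

Lemma plugin_gap_le (P Ph : 'M[R]_F) (ut vt : 'cV[R]_F) :
  inC c r ut vt ->
  (forall u v, inC c r u v -> bilin u Ph v <= bilin ut Ph vt) ->
  supC c r P - bilin ut P vt <= 2 * (kappa * c * r * frob (P - Ph)).
Proof.
move=> Ct opt; rewrite lerBlDl; apply: ge_sup.
  by exists (bilin 0 P 0), 0, 0; split => //; apply: inC0; apply: ltW.
move=> _ [u [v [Cuv ->]]].
move: (bilin_inC_le (P - Ph) Cuv) (bilin_inC_le (P - Ph) Ct).
rewrite !bilinBm => /ler_normlP [_ hu] /ler_normlP [ht _].
have := opt u v Cuv; lra.
Qed.

Lemma plugin_gap_event_sub (eps : R) (P Ph : 'M[R]_F) (ut vt : 'cV[R]_F) :
  0 < eps -> inC c r ut vt ->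
  (forall u v, inC c r u v -> bilin u Ph v <= bilin ut Ph vt) ->
  eps <= supC c r P - bilin ut P vt ->
  eps / (4 * kappa * r * c) <= frob (P - Ph).
Proof.
move=> eps_gt0 Ct opt gap; have := plugin_gap_le P Ct opt.
rewrite ler_pdivrMr; last by rewrite !mulr_gt0.
have := frob_ge0 (P - Ph); set f := frob _ => f0 hgap.
have : 0 <= kappa * c * r * f by rewrite !mulr_ge0 // ltW.
rewrite (_ : f * (4 * kappa * r * c) = 4 * (kappa * c * r * f)); last by ring.
lra.
Qed.

End OptimalityGap.

Lemma cover_size_gt0 (R : realType) (F : nat) (c r eps : R)
    (N : seq ('cV[R]_F * 'cV[R]_F)) :
  0 <= c -> 0 <= r -> is_cover c r eps N -> (0 < size N)%N.
Proof.
move=> c0 r0 [_ cov]; have [xy xyN _] := cov _ _ (inC0 F c0 r0).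
by case: N xyN {cov}.
Qed.

Section Measurability.
Variables (R : realType) (d : measure_display) (T : measurableType d) (F : nat).

Lemma measurable_ge (f : T -> R) (a : R) :
  measurable_fun setT f -> measurable [set w | a <= f w].
Proof.
move=> mf.
have := measurable_fun_ler (measurable_cst a) mf measurableT (Y := [set true]) I.
by rewrite setTI.
Qed.

Lemma measurable_bilin (x y : T -> 'cV[R]_F) (A : 'M[R]_F) :
  (forall i, measurable_fun setT (fun w => x w i 0)) ->
  (forall i, measurable_fun setT (fun w => y w i 0)) ->
  measurable_fun setT (fun w => bilin (x w) A (y w)).
Proof.
move=> mx my; under eq_fun do rewrite bilinE.
apply: measurable_sum => j; apply: measurable_funM => //.
apply: measurable_sum => i; apply: measurable_funM => //; exact: measurable_cst.
Qed.

Lemma measurable_frob (A : T -> 'M[R]_F) :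
  (forall i j, measurable_fun setT (fun w => A w i j)) ->
  measurable_fun setT (fun w => frob (A w)).
Proof.
move=> mA; apply: measurableT_comp.
  exact: continuous_measurable_fun (@sqrt_continuous R).
by apply: measurable_sum => i; apply: measurable_sum => j; exact: measurable_funX.
Qed.

End Measurability.

Theorem theorem1 (R : realType) (d : measure_display) (T : measurableType d)
    (Pr : probability T R) (F : nat) (c r eps kappa : R)
    (Pk : 'M[R]_F) (Phat : T -> 'M[R]_F) (ut vt : T -> 'cV[R]_F)
    (N : seq ('cV[R]_F * 'cV[R]_F)) :
  0 < c -> 0 < r -> 0 < eps -> 0 < kappa ->
  (forall (x y : 'cV[R]_F) (A : 'M[R]_F),
      `|bilin x A y| <= kappa * l1norm x * l1norm y * frob A) ->
  (forall i j, 0 <= Pk i j <= 1) ->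
  (forall i j, measurable_fun setT (fun w => Phat w i j)) ->
  (forall i, measurable_fun setT (fun w => ut w i 0)) ->
  (forall i, measurable_fun setT (fun w => vt w i 0)) ->
  (forall w, inC c r (ut w) (vt w) /\
     forall u v, inC c r u v -> bilin u (Phat w) v <= bilin (ut w) (Phat w) (vt w)) ->
  is_cover c r eps N ->
  (Pr [set w | (eps <= supC c r Pk - bilin (ut w) Pk (vt w))%R] <=
   (size N)%:R%:E *
     Pr [set w | (eps / (4 * kappa * r * c) <= frob (Pk - Phat w))%R])%E.
Proof.
move=> c0 r0 eps0 kappa0 hk _ mPhat mut mvt hopt cover.
have sub : [set w | eps <= supC c r Pk - bilin (ut w) Pk (vt w)] `<=`
           [set w | eps / (4 * kappa * r * c) <= frob (Pk - Phat w)].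
  move=> w /= gap; have [Ct opt] := hopt w.
  exact (plugin_gap_event_sub c0 r0 kappa0 hk eps0 Ct opt gap).
have mgap : measurable [set w | eps <= supC c r Pk - bilin (ut w) Pk (vt w)].
  apply/measurable_ge/measurable_funB; first exact: measurable_cst.
  exact: measurable_bilin.
have merr : measurable [set w | eps / (4 * kappa * r * c) <= frob (Pk - Phat w)].
  apply/measurable_ge/measurable_frob => i j; under eq_fun do rewrite !mxE.
  exact: measurable_funB (measurable_cst _) (mPhat i j).
apply: le_trans (le_measure _ _ _ sub) _; rewrite ?inE //.
rewrite -[X in (X <= _)%E]mul1e; apply: lee_wpmul2r; first exact: measure_ge0.
by rewrite lee_fin ler1n (cover_size_gt0 (ltW c0) (ltW r0) cover).
Qed.
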